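(* Let $\mathcal{P}$ and $\mathcal{N}$ be disjoint finite index sets (positives and negatives) with $|\mathcal{P}|\ge 1$. Let $(s_i)_{i\in\mathcal{P}\cup\mathcal{N}}$ be real logits, pairwise distinct, and for each $i\in\mathcal{P}$ let $\mathrm{IoU}_i\in[0,1]$. Take the smoothing parameter $\delta=0$, i.e. $H(x)=1$ for $x>0$ and $H(x)=0$ for $x<0$. Then, for every index $i\in\mathcal{P}\cup\mathcal{N}$, the Bucketed AP Loss gradient equals the AP Loss gradient, $\frac{\partial\mathcal{L}_{BAP}}{\partial s_i}=\frac{\partial\mathcal{L}_{AP}}{\partial s_i}$, and the Bucketed RS Loss gradient equals the RS Loss gradient, $\frac{\partial\mathcal{L}_{BRS}}{\partial s_i}=\frac{\partial\mathcal{L}_{RS}}{\partial s_i}$, where all four quantities are defined as in the context.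
   Context: Notation. $x_{ij}=s_j-s_i$. For $i\in\mathcal{P}$: $N_{FP}(i)=\sum_{j\in\mathcal{N}}H(x_{ij})$, $\mathrm{rank}(i)=1+\sum_{j\in\mathcal{P}\cup\mathcal{N},\,j\ne i}H(x_{ij})$, $\mathrm{rank}^+(i)=1+\sum_{j\in\mathcal{P},\,j\neq i}H(x_{ij})$ (the self-term counts as $1$). Convention: a ratio with zero denominator is $0$. Ranking error $\ell_R(i)=N_{FP}(i)/\mathrm{rank}(i)$, ranking pmf $p_R(j|i)=H(x_{ij})/N_{FP}(i)$ for $j\in\mathcal{N}$. Sorting error $\ell_S(i)=\frac{1}{\mathrm{rank}^+(i)}\sum_{j\in\mathcal{P}}H(x_{ij})(1-\mathrm{IoU}_j)$; target sorting error $\ell^*_S(i)=\frac{\sum_{j\in\mathcal{P}}H(x_{ij})[\mathrm{IoU}_j\ge \mathrm{IoU}_i](1-\mathrm{IoU}_j)}{\sum_{j\in\mathcal{P}}H(x_{ij})[\mathrm{IoU}_j\ge\mathrm{IoU}_i]}$; sorting pmf $p_S(j|i)=\frac{H(x_{ij})[\mathrm{IoU}_j<\mathrm{IoU}_i]}{\sum_{k\in\mathcal{P}}H(x_{ik})[\mathrm{IoU}_k<\mathrm{IoU}_i]}$ for $j\in\mathcal{P}$ ($[\cdot]$ is the Iverson bracket; in these $\mathcal{P}$-sums the term $j=i$ uses $H(x_{ii}):=1$). AP Loss gradients (identity update): for $i\in\mathcal{P}$, $\frac{\partial\mathcal{L}_{AP}}{\partial s_i}=-\frac{1}{|\mathcal{P}|}\ell_R(i)$;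 for $i\in\mathcal{N}$, $\frac{\partial\mathcal{L}_{AP}}{\partial s_i}=\frac{1}{|\mathcal{P}|}\sum_{j\in\mathcal{P}}\ell_R(j)p_R(i|j)$. RS Loss gradients: for $i\in\mathcal{N}$ they equal the AP Loss gradients; for $i\in\mathcal{P}$, $\frac{\partial\mathcal{L}_{RS}}{\partial s_i}=\frac{1}{|\mathcal{P}|}\big(-\ell_R(i)+\ell^*_S(i)-\ell_S(i)+\sum_{j\in\mathcal{P}}(\ell_S(j)-\ell^*_S(j))p_S(i|j)\big)$. Buckets. Sort all logits decreasingly; the positives appear as $\hat s^+_1>\dots>\hat s^+_{|\mathcal{P}|}$. Bucket $B_1$ is the set of negatives with logit $>\hat s^+_1$, $B_k$ ($2\le k\le|\mathcal{P}|$) the negatives with logit in $(\hat s^+_k,\hat s^+_{k-1})$, $B_{|\mathcal{P}|+1}$ the negatives with logit $<\hat s^+_{|\mathcal{P}|}$; $b_k=|B_k|$. For nonempty $B_k$, the prototype logit $s^b_k$ is the mean of the logits in $B_k$, and $x^b_{ik}=s^b_k-s_i$. For $i\in\mathcal{P}$: $N^b_{FP}(i)=\sum_{k:b_k>0}H(x^b_{ik})b_k$, bucketed ranking error $\ell^b_R(i)=\frac{N^b_{FP}(i)}{\sum_{j\in\mathcal{P}}H(x_{ij})+N^b_{FP}(i)}$ (with $H(x_{ii}):=1$), and bucket pmf $p(k^b|i)=\frac{b_kH(x^b_{ik})}{N^b_{FP}(i)}$. Bucketed AP Loss gradients: for $i\in\mathcal{P}$, $\frac{\partial\mathcal{L}_{BAP}}{\partial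 s_i}=-\frac{1}{|\mathcal{P}|}\ell^b_R(i)$; for a negative $i\in B_k$, $\frac{\partial\mathcal{L}_{BAP}}{\partial s_i}=\frac{1}{|\mathcal{P}|}\sum_{j\in\mathcal{P}}\ell^b_R(j)\,p(k^b|j)\,\frac{1}{b_k}$. Bucketed RS Loss gradients: for negatives equal to the Bucketed AP gradients; for $i\in\mathcal{P}$, $\frac{\partial\mathcal{L}_{BRS}}{\partial s_i}=\frac{1}{|\mathcal{P}|}\big(-\ell^b_R(i)+\ell^*_S(i)-\ell_S(i)+\sum_{j\in\mathcal{P}}(\ell_S(j)-\ell^*_S(j))p_S(i|j)\big)$. *)

From mathcomp Require Import all_boot all_order all_algebra.
Set Implicit Arguments. Unset Strict Implicit. Unset Printing Implicit Defensive.
Import Order.TTheory GRing.Theory Num.Theory.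
Local Open Scope ring_scope.

Section Losses.
Context (R : realFieldType) (T : finType) (P N : {set T}) (s iou : T -> R).

(* step function (smoothing delta = 0); the value at 0 never matters for
   distinct logits, self-terms are handled by Hs *)
Definition iv (c : bool) : R := if c then 1 else 0.

Definition H (x : R) : R := if 0 < x then 1 else 0.

Definition Hs (i j : T) : R := if i == j then 1 else H (s j - s i).

(* Ratios: in MathComp x / 0 = 0, which matches the "zero denominator" convention. *)
Definition NFP (i : T) : R := \sum_(j in N) H (s j - s i).
Definition rank (i : T) : R := 1 + \sum_(j in P :|: N | j != i) H (s j - s i).
Definition rankp (i : T) : R := 1 + \sum_(j in P | j != i) H (s j - s i).
Definition lR (i : T) : R := NFP i / rank i.
Definition pR (j i : T) : R := H (s j - s i) / NFP i.

Definition lS (i : T) : R :=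
  (rankp i)^-1 * \sum_(j in P) Hs i j * (1 - iou j).
Definition lSstar (i : T) : R :=
  (\sum_(j in P) Hs i j * iv (iou i <= iou j) * (1 - iou j)) /
  (\sum_(j in P) Hs i j * iv (iou i <= iou j)).
Definition pS (j i : T) : R :=
  Hs i j * iv (iou j < iou i) / (\sum_(k in P) Hs i k * iv (iou k < iou i)).

Definition invP : R := (#|P|%:R)^-1.

Definition gAP_pos (i : T) : R := - (invP * lR i).
Definition gAP_neg (i : T) : R := invP * \sum_(j in P) lR j * pR i j.
Definition gRS_pos (i : T) : R :=
  invP * (- lR i + lSstar i - lS i + \sum_(j in P) (lS j - lSstar j) * pS i j).
Definition gRS_neg (i : T) : R := gAP_neg i.

(* Buckets: positives' logits sorted decreasingly; shat`_(k-1) is \hat s^+_k. *)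
Definition shat : seq R := sort (fun x y => y <= x) [seq s j | j in P].

(* bucket B_k for 1 <= k <= |P|+1 *)
Definition B (k : nat) : {set T} :=
  [set n in N | ((k == 1)%N || (s n < shat`_(k.-2))) &&
                ((k == #|P|.+1)%N || (shat`_(k.-1) < s n))].
Definition b (k : nat) : nat := #|B k|.
Definition sb (k : nat) : R := (\sum_(n in B k) s n) / (b k)%:R.

Definition NbFP (i : T) : R :=
  \sum_(1 <= k < #|P|.+2 | (0 < b k)%N) H (sb k - s i) * (b k)%:R.
Definition lbR (i : T) : R := NbFP i / (\sum_(j in P) Hs i j + NbFP i).
Definition pb (k : nat) (i : T) : R := (b k)%:R * H (sb k - s i) / NbFP i.

Definition gBAP_pos (i : T) : R := - (invP * lbR i).
(* gradient of a negative lying in bucket B_k *)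
Definition gBAP_neg (k : nat) : R :=
  invP * \sum_(j in P) lbR j * pb k j / (b k)%:R.
Definition gBRS_pos (i : T) : R :=
  invP * (- lbR i + lSstar i - lS i + \sum_(j in P) (lS j - lSstar j) * pS i j).
Definition gBRS_neg (k : nat) : R := gBAP_neg k.

End Losses.

(* Distinct logits make the positive logits cut the line into the buckets:
   a negative n lies in B_k exactly when k - 1 positive logits exceed s_n.
   So all negatives of B_k lie on the same side of each positive logit s_j,
   and so does their mean s^b_k; thus H(s^b_k - s_j) b_k counts the negatives
   of B_k above s_j.  Summing over the buckets gives N^b_FP = N_FP, hence
   l^b_R = l_R and p(k^b|j) / b_k = p_R(n|j) for every n in B_k, while the
   sorting terms are shared by both losses. *)

From mathcomp Require Import all_boot all_order all_algebra.
Import Order.TTheory GRing.Theory Num.Theory.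
Local Open Scope ring_scope.
Set Implicit Arguments. Unset Strict Implicit.

Lemma ltr_mean (R : realFieldType) (T : finType) (A : {pred T}) (f : T -> R)
    (x : R) (c : bool) :
  (0 < #|A|)%N -> {in A, forall n, (x < f n) = c} ->
  (x < (\sum_(n in A) f n) / #|A|%:R) = c.
Proof.
move=> A0 fAc; rewrite ltr_pdivlMr ?ltr0n // mulr_natr -sumr_const.
have [n0 An0] := card_gt0P A0.
case: c fAc => fAc.
- apply: ltr_sum => [|n nA]; last by rewrite fAc.
  by apply/hasP; exists n0; rewrite ?mem_index_enum.
- by apply/negbTE; rewrite -leNgt; apply: ler_sum => n nA; rewrite leNgt fAc.
Qed.

Section Buckets.
Variables (R : realFieldType) (T : finType) (P N : {set T}) (s : T -> R).
Hypothesis dPN : [disjoint P & N].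
Hypothesis s_inj : {in P :|: N &, injective s}.

Local Notation shat := (shat P s).
Local Notation B := (B P N s).

Lemma size_shat : size shat = #|P|.
Proof. by rewrite /shat size_sort size_map -cardE. Qed.

Lemma shat_nonincr i j : (i <= j < #|P|)%N -> shat`_j <= shat`_i.
Proof.
move=> /andP [ij jP]; apply: (sorted_leq_nth (leT := fun x y => y <= x)) => //.
- by move=> x y z /= yx zy; apply: le_trans zy yx.
- by apply: sort_sorted => x y; apply: le_total.
- by rewrite inE size_shat (leq_ltn_trans ij).
- by rewrite inE size_shat.
Qed.

Lemma nth_index_shat j : j \in P ->
  (index (s j) shat < #|P|)%N /\ shat`_(index (s j) shat) = s j.
Proof.
move=> jP; have sjP : s j \in shat.
  by rewrite mem_sort; apply: map_f; rewrite mem_enum.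
by split; [rewrite -size_shat index_mem | rewrite nth_index].
Qed.

Lemma shat_neq_neg n i : n \in N -> (i < #|P|)%N -> shat`_i != s n.
Proof.
move=> nN iP; have : shat`_i \in shat by rewrite mem_nth ?size_shat.
rewrite mem_sort => /mapP [j]; rewrite mem_enum => jP ->.
apply/eqP => /s_inj eq_jn.
have jn : j = n by apply: eq_jn; rewrite inE ?jP ?nN ?orbT.
by move: (disjointFr dPN jP); rewrite jn nN.
Qed.

(* [find] counts the positive logits above [s n], as [shat] is decreasing. *)
Definition bucket (n : T) : nat := (find (fun x => x < s n) shat).+1.

Lemma bucket_le n : (bucket n <= #|P|.+1)%N.
Proof. by rewrite ltnS -size_shat find_size. Qed.

Lemma shat_lt_neg n i : n \in N -> (i < #|P|)%N ->
  (shat`_i < s n) = (bucket n <= i.+1)%N.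
Proof.
move=> nN iP; rewrite ltnS; case: leqP => [fi | if_].
- have has_lt : has (fun x => x < s n) shat.
    by rewrite has_find (leq_ltn_trans fi) ?size_shat.
  by apply: le_lt_trans (nth_find 0 has_lt); apply: shat_nonincr; rewrite fi.
- exact: before_find if_.
Qed.

Lemma neg_lt_shat n i : n \in N -> (i < #|P|)%N ->
  (s n < shat`_i) = (i.+2 <= bucket n)%N.
Proof.
move=> nN iP; rewrite lt_neqAle eq_sym (negbTE (shat_neq_neg nN iP)) /=.
by rewrite leNgt shat_lt_neg // ltnNge.
Qed.

Lemma mem_B n k : (1 <= k <= #|P|.+1)%N ->
  (n \in B k) = (n \in N) && (bucket n == k).
Proof.
move=> /andP [k1 kP]; rewrite inE; case nN: (n \in N) => //=.
have le_k_bucket : ((k == 1)%N || (s n < shat`_k.-2)) = (k <= bucket n)%N.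
  case: k k1 kP => [|[|k]] //= _ kP.
  by rewrite neg_lt_shat.
have le_bucket_k : ((k == #|P|.+1)%N || (shat`_k.-1 < s n)) = (bucket n <= k)%N.
  case: (ltngtP k #|P|.+1) kP => // [kP _ | -> _]; last by rewrite bucket_le.
  by case: k {le_k_bucket} k1 kP => // k _ kP; rewrite shat_lt_neg.
by rewrite le_k_bucket le_bucket_k eqn_leq andbC.
Qed.

Lemma bucket_mem_B n : n \in N -> n \in B (bucket n).
Proof. by move=> nN; rewrite mem_B ?nN ?eqxx ?bucket_le. Qed.

Lemma sum_buckets (f : T -> R) :
  \sum_(1 <= k < #|P|.+2) \sum_(n in B k) f n = \sum_(n in N) f n.
Proof.
have split_n n : n \in N ->
    f n = \sum_(1 <= k < #|P|.+2) (if k == bucket n then f n else 0).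
  by move=> nN; rewrite -big_mkcondr big_nat1_eq ltnS bucket_le.
rewrite (eq_bigr _ split_n) exchange_big; apply: eq_big_nat => k kP.
by rewrite -big_mkcondr; apply: eq_bigl => n; rewrite mem_B // eq_sym.
Qed.

Lemma pos_lt_neg j n : j \in P -> n \in N ->
  (s j < s n) = (bucket n <= (index (s j) shat).+1)%N.
Proof.
move=> jP nN; have [idx_lt sjE] := nth_index_shat jP.
by rewrite -{1}sjE shat_lt_neg.
Qed.

Lemma H_sb j k n : j \in P -> (1 <= k <= #|P|.+1)%N -> n \in B k ->
  H (sb P N s k - s j) = H (s n - s j).
Proof.
move=> jP kP nB; rewrite /H !subr_gt0 /sb /b (ltr_mean (c := s j < s n)) //.
  by rewrite card_gt0; apply/set0Pn; exists n.
move=> m; rewrite !mem_B // in nB * => /andP [mN /eqP bm].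
move: nB => /andP [nN /eqP bn].
by rewrite !pos_lt_neg // bn bm.
Qed.

Lemma NbFP_eq j : j \in P -> NbFP P N s j = NFP N s j.
Proof.
move=> jP; rewrite /NbFP /NFP -sum_buckets big_mkcond /=.
apply: eq_big_nat => k kP; rewrite (eq_bigr (fun=> H (sb P N s k - s j))).
  by rewrite sumr_const mulr_natr /b; case: posnP => [-> | //]; rewrite mulr0n.
by move=> n nB; rewrite (H_sb jP kP nB).
Qed.

Lemma sum_Hs j : j \in P -> \sum_(i in P) Hs s j i = rankp P s j.
Proof.
move=> jP; rewrite (bigD1 j jP) /= /Hs eqxx; congr (_ + _).
by apply: eq_bigr => i /andP [_ ij]; rewrite eq_sym (negbTE ij).
Qed.

Lemma rank_rankp j : j \in P -> rank P N s j = rankp P s j + NFP N s j.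
Proof.
move=> jP; rewrite /rank /rankp /NFP -addrA; congr (_ + _).
rewrite big_mkcondr (eq_bigl [predU P & N]) => [|i]; last by rewrite !inE.
rewrite bigU //= -big_mkcondr; congr (_ + _); apply: eq_bigr => i iN.
by case: eqP => [eq_ij | //]; move: (disjointFr dPN jP); rewrite -eq_ij iN.
Qed.

Lemma lbR_eq j : j \in P -> lbR P N s j = lR P N s j.
Proof. by move=> jP; rewrite /lbR /lR NbFP_eq // rank_rankp // sum_Hs. Qed.

Lemma pb_div_b j k n : j \in P -> (1 <= k <= #|P|.+1)%N -> n \in B k ->
  pb P N s k j / (b P N s k)%:R = pR N s n j.
Proof.
move=> jP kP nB; have b_neq0 : (b P N s k)%:R != 0 :> R.
  by rewrite pnatr_eq0 -lt0n /b card_gt0; apply/set0Pn; exists n.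
by rewrite /pb /pR NbFP_eq // (H_sb jP kP nB) mulrAC [_ * H _]mulrC mulfK.
Qed.

End Buckets.

Theorem theorem1 (R : realFieldType) (T : finType) (P N : {set T})
    (s iou : T -> R) :
  [disjoint P & N] -> (0 < #|P|)%N ->
  {in P :|: N &, injective s} ->
  (forall i, i \in P -> 0 <= iou i <= 1) ->
  (forall i, i \in P ->
     gBAP_pos P N s i = gAP_pos P N s i /\
     gBRS_pos P N s iou i = gRS_pos P N s iou i) /\
  (forall i, i \in N ->
     (exists k, [&& (1 <= k)%N, (k <= #|P|.+1)%N & i \in B P N s k]) /\
     (forall k, (1 <= k <= #|P|.+1)%N -> i \in B P N s k ->
        gBAP_neg P N s k = gAP_neg P N s i /\
        gBRS_neg P N s k = gRS_neg P N s i)).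
Proof.
move=> dPN _ s_inj _; split=> [i iP | i iN].
  by rewrite /gBAP_pos /gAP_pos /gBRS_pos /gRS_pos lbR_eq.
split=> [|k kP iB].
  by exists (bucket P s i); rewrite /= bucket_le bucket_mem_B.
have gneg : gBAP_neg P N s k = gAP_neg P N s i.
  rewrite /gBAP_neg /gAP_neg; congr (_ * _); apply: eq_bigr => j jP.
  by rewrite -mulrA (pb_div_b dPN s_inj jP kP iB) lbR_eq.
by rewrite /gBRS_neg /gRS_neg gneg.
Qed.
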